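(* Suppose $G$ is a complete graph whose travel times satisfy the triangle inequality $t_{i,j}\le t_{i,k}+t_{k,j}$ for all distinct $i,j,k\in V$. Let $C_1,\dots,C_m$ be length-feasible cycles whose node sets cover $V$ (every node lies in at least one $C_r$). Then there exist $m'\le m$ length-feasible cycles whose node sets partition $V$; in particular the minimum number of length-feasible cycles needed to cover $V$ equals the minimum number needed to partition $V$.
   Context: $G=(V,E)$ is an undirected graph with critical times $q_i>0$ ($i\in V$) and travel times $t_{i,j}=t_{j,i}\ge 0$ ($\{i,j\}\in E$). A cycle is $C=(i_0,i_1,\dots,i_K)$ with $K\ge1$, $i_K=i_0$, $i_0,\dots,i_{K-1}$ distinct and $\{i_{k-1},i_k\}\in E$ for all $k$ when $K\ge2$; for $K=1$ it is the singleton cycle on node $i_0$, with travel time $0$. Its travel time is $t(C)=\sum_{k=1}^K t_{i_{k-1},i_k}$ (for $K\ge2$) and its minimum critical time is $q(C)=\min_{0\le k\le K}q_{i_k}$. $C$ is length-feasible if $t(C)\le q(C)$. *)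

From mathcomp Require Import all_boot all_order all_algebra.
Set Implicit Arguments. Unset Strict Implicit. Unset Printing Implicit Defensive.
Import Order.TTheory GRing.Theory Num.Theory.
Local Open Scope ring_scope.

(* The graph is complete on the finite node set V, so every pair of distinct
   nodes is an edge.  A cycle C = (i_0,...,i_{K-1},i_0) is represented by the
   sequence [:: i_0; ...; i_{K-1}] of its distinct nodes (K >= 1). *)
Definition is_cycle (V : finType) (s : seq V) : bool := (s != [::]) && uniq s.

Definition cycle_time (R : numDomainType) (V : finType) (t : V -> V -> R)
  (s : seq V) : R :=
  if (size s <= 1)%N then 0
  else \sum_(p <- zip s (rot 1 s)) t p.1 p.2.

Definition cycle_minq (R : realDomainType) (V : finType) (q : V -> R)
  (s : seq V) : R :=
  match s with
  | [::] => 0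
  | x :: s' => foldr Num.min (q x) (map q s')
  end.

Definition length_feasible (R : realDomainType) (V : finType)
  (t : V -> V -> R) (q : V -> R) (s : seq V) : bool :=
  is_cycle s && (cycle_time t s <= cycle_minq q s).

From mathcomp Require Import all_boot all_order all_algebra.
Import Order.TTheory GRing.Theory Num.Theory.
Local Open Scope ring_scope.
Set Implicit Arguments. Unset Strict Implicit.

(* Greedy shortcutting: go through the cycles C_1, ..., C_m in order and keep
   from C_r only the nodes not already covered by C_1, ..., C_(r-1), visited in
   the cyclic order of C_r.  By the triangle inequality, skipping nodes never
   increases the travel time, and dropping nodes can only raise the minimum
   critical time, so every nonempty shortcut is again length-feasible; a
   shortcut reduced to one node has travel time 0 < q. *)

Section CycleTime.
Variables (R : numDomainType) (V : finType) (t : V -> V -> R).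

Fixpoint path_time (a : V) (s : seq V) : R :=
  if s is y :: s' then t a y + path_time y s' else 0.

Lemma path_time_rcons a s b :
  path_time a (rcons s b) = path_time a s + t (last a s) b.
Proof.
elim: s a => [|y s IHs] a /=; first by rewrite addr0 add0r.
by rewrite IHs addrA.
Qed.

Lemma cycle_time_cons x s :
  s != [::] -> cycle_time t (x :: s) = path_time x (rcons s x).
Proof.
case: s => [|y s] // _; rewrite /cycle_time /= big_cons cats1.
congr (_ + _); elim: s y => [|z s IHs] y /=; first by rewrite big_cons big_nil.
by rewrite big_cons IHs.
Qed.

Lemma cycle_time_rot1 s : cycle_time t (rot 1 s) = cycle_time t s.
Proof.
case: s => [|x [|y s]] //; rewrite rot1_cons.
have -> : rcons (y :: s) x = y :: rcons s x by [].
rewrite !cycle_time_cons -?size_eq0 ?size_rcons //.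
by rewrite path_time_rcons last_rcons /= addrC.
Qed.

Lemma cycle_time_rot k s : cycle_time t (rot k s) = cycle_time t s.
Proof.
have [/rot_oversize -> //|] := leqP (size s) k.
elim: k => [|k IHk] ltks; first by rewrite rot0.
by rewrite rotS ?cycle_time_rot1 ?IHk // ltnW.
Qed.

Hypothesis t_triangle : forall i j k, i != j -> j != k -> i != k ->
  t i j <= t i k + t k j.

(* The disjunction excludes the one case where the triangle inequality is not
   available: the path a -> ... -> b collapses to the loop a -> a. *)
Lemma path_time_filter (P : pred V) a s b :
  uniq (a :: s) -> b \notin s -> (a != b) || (filter P s != [::]) ->
  path_time a (rcons (filter P s) b) <= path_time a (rcons s b).
Proof.
elim: s a => [|y s IHs] a //=.
rewrite !inE !negb_or => /and3P[/andP[ay a_s] y_s us] /andP[yb b_s] keep.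
case Py: (P y) => /=.
  by rewrite lerD2l IHs //= ?y_s // eq_sym yb.
rewrite Py in keep; apply: le_trans (IHs a _ b_s keep) _; first by rewrite /= a_s.
case: s a_s y_s us b_s keep {IHs} => [|z s] /= a_s y_s _ _ keep.
  by rewrite !addr0 t_triangle // -(orbF (a != b)).
move: a_s y_s; rewrite !inE !negb_or => /andP[az _] /andP[yz _].
by rewrite addrA lerD2r t_triangle // eq_sym.
Qed.

End CycleTime.

Section CycleMinq.
Variables (R : realDomainType) (V : finType) (q : V -> R).

Lemma cycle_minq_le s v : v \in s -> cycle_minq q s <= q v.
Proof.
case: s => // x s /=; elim: s => [|y s IHs]; first by rewrite inE => /eqP ->.
rewrite /= ge_min !inE => /or3P[vx|/eqP->|vs]; rewrite ?lexx ?orbT //.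
- by rewrite IHs ?orbT // inE vx.
- by rewrite IHs ?orbT // inE vs orbT.
Qed.

Lemma cycle_minq_mem s : s != [::] -> exists2 w, w \in s & cycle_minq q s = q w.
Proof.
case: s => // x s _ /=.
elim: s => [|y s [w ws minq_w]]; first by exists x; rewrite ?inE.
rewrite /= minq_w minEle; case: ifP => _.
  by exists y; rewrite // !inE eqxx orbT.
by exists w => //; move: ws; rewrite !inE => /orP[] ->; rewrite ?orbT.
Qed.

Lemma cycle_minq_subset s s' :
  s' != [::] -> {subset s' <= s} -> cycle_minq q s <= cycle_minq q s'.
Proof.
by move=> /cycle_minq_mem[w ws' ->] ss'; apply/cycle_minq_le/ss'.
Qed.

End CycleMinq.

Section Shortcut.
Variables (V : finType) (P : pred V).

(* Rotating first makes the shortcut start at a node it keeps, so the closing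
   edge of the shortcut can be compared with a path of the original cycle. *)
Definition shortcut (c : seq V) : seq V := filter P (rot (find P c) c).

Lemma mem_shortcut c v : (v \in shortcut c) = P v && (v \in c).
Proof. by rewrite mem_filter mem_rot. Qed.

Lemma uniq_shortcut c : uniq c -> uniq (shortcut c).
Proof. by move=> uc; rewrite filter_uniq ?rot_uniq. Qed.

Lemma rot_find_cons c : has P c ->
  exists y s, rot (find P c) c = y :: s /\ P y.
Proof.
case: c => // x c hasP; have ltfc := hasP; rewrite has_find in ltfc.
exists (nth x (x :: c) (find P (x :: c))).
exists (drop (find P (x :: c)).+1 (x :: c) ++ take (find P (x :: c)) (x :: c)).
by rewrite /rot (drop_nth x ltfc) nth_find.
Qed.

Lemma cycle_time_shortcut (R : numDomainType) (t : V -> V -> R) c :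
  (forall i j k, i != j -> j != k -> i != k -> t i j <= t i k + t k j) ->
  uniq c -> (1 < size (shortcut c))%N ->
  cycle_time t (shortcut c) <= cycle_time t c.
Proof.
move=> t_triangle uc size_sc.
have has_P : has P c.
  by rewrite -(has_rot (find P c)) -size_filter_gt0 ltnW.
have [y [s [rot_c Py]]] := rot_find_cons has_P.
have sc_def : shortcut c = y :: filter P s by rewrite /shortcut rot_c /= Py.
have uys : uniq (y :: s) by rewrite -rot_c rot_uniq.
rewrite sc_def /= ltnS lt0n size_eq0 in size_sc.
have s_nil : s != [::] by apply: contraNneq size_sc => ->.
rewrite -(cycle_time_rot t (find P c) c) rot_c sc_def !cycle_time_cons //.
by apply: path_time_filter; rewrite ?size_sc ?orbT //; case/andP: uys.
Qed.

Lemma shortcut_feasible (R : realFieldType) (t : V -> V -> R) (q : V -> R) c :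
  (forall i, 0 < q i) ->
  (forall i j k, i != j -> j != k -> i != k -> t i j <= t i k + t k j) ->
  length_feasible t q c -> shortcut c != [::] ->
  length_feasible t q (shortcut c).
Proof.
move=> q_gt0 t_triangle /andP[/andP[_ uc] feas_c] sc_nil.
rewrite /length_feasible /is_cycle sc_nil uniq_shortcut //=.
have [small_sc|big_sc] := leqP (size (shortcut c)) 1.
  have [w _ ->] := cycle_minq_mem q sc_nil.
  by rewrite /cycle_time small_sc ltW.
apply: le_trans (cycle_time_shortcut t_triangle uc big_sc) _.
apply: le_trans feas_c (cycle_minq_subset q sc_nil _).
by move=> v; rewrite mem_shortcut => /andP[].
Qed.

End Shortcut.

Fixpoint greedy_shortcuts (V : finType) (seen : seq V) (Cs : seq (seq V)) :=
  if Cs is c :: Cs' then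
    shortcut (fun v => v \notin seen) c :: greedy_shortcuts (seen ++ c) Cs'
  else [::].

Lemma size_greedy_shortcuts (V : finType) (seen : seq V) Cs :
  size (greedy_shortcuts seen Cs) = size Cs.
Proof. by elim: Cs seen => //= c Cs IHCs seen; rewrite IHCs. Qed.

Lemma count_mem_greedy_shortcuts (V : finType) (seen : seq V) Cs v :
  count (fun c => v \in c) (greedy_shortcuts seen Cs) =
  ((v \notin seen) && has (fun c => v \in c) Cs : nat).
Proof.
elim: Cs seen => [|c Cs IHCs] seen /=; first by rewrite andbF.
rewrite mem_shortcut IHCs mem_cat negb_or.
by case: (v \in seen); case: (v \in c).
Qed.

Lemma all_greedy_shortcuts_feasible (R : realFieldType) (V : finType)
  (t : V -> V -> R) (q : V -> R) (seen : seq V) Cs :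
  (forall i, 0 < q i) ->
  (forall i j k, i != j -> j != k -> i != k -> t i j <= t i k + t k j) ->
  all (length_feasible t q) Cs ->
  all (length_feasible t q) (filter (predC1 [::]) (greedy_shortcuts seen Cs)).
Proof.
move=> q_gt0 t_triangle; elim: Cs seen => [|c Cs IHCs] seen //= /andP[feas_c feas_Cs].
case: ifP => [sc_nil|_]; last exact: IHCs.
by rewrite /= shortcut_feasible ?IHCs.
Qed.

Theorem mainTheorem5 (R : realFieldType) (V : finType)
  (q : V -> R) (t : V -> V -> R)
  (hq : forall i, 0 < q i)
  (ht_sym : forall i j, i != j -> t i j = t j i)
  (ht_nonneg : forall i j, i != j -> 0 <= t i j)
  (ht_tri : forall i j k, i != j -> j != k -> i != k ->
     t i j <= t i k + t k j)
  (Cs : seq (seq V))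
  (hCs : all (length_feasible t q) Cs)
  (hcover : forall v : V, has (fun c => v \in c) Cs) :
  exists Ds : seq (seq V),
    [/\ (size Ds <= size Cs)%N,
        all (length_feasible t q) Ds &
        forall v : V, count (fun c => v \in c) Ds = 1%N].
Proof.
set Ds0 := greedy_shortcuts [::] Cs.
exists (filter (predC1 [::]) Ds0); split.
- by rewrite size_filter -(size_greedy_shortcuts [::] Cs) count_size.
- exact: all_greedy_shortcuts_feasible.
- move=> v; rewrite count_filter (@eq_count _ _ (fun c => v \in c)).
    by rewrite count_mem_greedy_shortcuts hcover.
  by case=> //= x c; rewrite andbT.
Qed.
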